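(* Let $0<q<1$ and $c,d,z_1,z_2\in\mathbb C$ with $cz_1\ne q^{-r}$ and $dz_2\ne q^{-r}$ for all integers $r\ge1$. Then the double series below converges absolutely and $$\sum_{m,n=0}^\infty\frac{q^{m^2-mn+n^2}\,h_{m,n}(z_1,z_2|q)}{(q,cz_1q;q)_m\,(q,dz_2q;q)_n}\,c^md^n=\frac{A_q(cd)}{(cz_1q,dz_2q;q)_\infty}.$$
   Context: $(a;q)_n=\prod_{j=0}^{n-1}(1-aq^j)$, $(a;q)_\infty=\prod_{j\ge0}(1-aq^j)$, $(a_1,\dots,a_r;q)_n=\prod_i(a_i;q)_n$, $\left[{m\atop k}\right]_q=\frac{(q;q)_m}{(q;q)_k(q;q)_{m-k}}$, $m\wedge n=\min\{m,n\}$. The second $q$-$2D$-Hermite polynomials are $$h_{m,n}(z_1,z_2|q)=\sum_{j=0}^{m\wedge n}\left[{m\atop j}\right]_q\left[{n\atop j}\right]_q q^{(m-j)(n-j)}(-1)^j(q;q)_j\,z_1^{m-j}z_2^{n-j}.$$ The Ramanujan function is $A_q(z)=\sum_{n=0}^\infty\frac{q^{n^2}}{(q;q)_n}(-z)^n$. *)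

From Stdlib Require Import Reals Lra Lia.
Open Scope R_scope.

Record Cx := mkC { Cre : R; Cim : R }.

Definition RtoC (x : R) : Cx := mkC x 0.
Definition C0 : Cx := RtoC 0.
Definition C1 : Cx := RtoC 1.
Definition Cadd (z w : Cx) : Cx := mkC (Cre z + Cre w) (Cim z + Cim w).
Definition Copp (z : Cx) : Cx := mkC (- Cre z) (- Cim z).
Definition Csub (z w : Cx) : Cx := Cadd z (Copp w).
Definition Cmul (z w : Cx) : Cx :=
  mkC (Cre z * Cre w - Cim z * Cim w) (Cre z * Cim w + Cim z * Cre w).
Definition Cinv (z : Cx) : Cx :=
  let n2 := Cre z * Cre z + Cim z * Cim z in
  mkC (Cre z / n2) (- Cim z / n2).
Definition Cdiv (z w : Cx) : Cx := Cmul z (Cinv w).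
Fixpoint Cpow (z : Cx) (n : nat) : Cx :=
  match n with O => C1 | S k => Cmul z (Cpow z k) end.
Definition Cnorm (z : Cx) : R := sqrt (Cre z * Cre z + Cim z * Cim z).

Fixpoint Csum (f : nat -> Cx) (n : nat) : Cx :=
  match n with O => C0 | S k => Cadd (Csum f k) (f k) end.
Fixpoint Cprod (f : nat -> Cx) (n : nat) : Cx :=
  match n with O => C1 | S k => Cmul (Cprod f k) (f k) end.
Fixpoint Rsum (f : nat -> R) (n : nat) : R :=
  match n with O => 0 | S k => Rsum f k + f k end.

Definition C_cv (u : nat -> Cx) (l : Cx) : Prop :=
  forall eps : R, eps > 0 ->
    exists N : nat, forall n : nat, (n >= N)%nat -> Cnorm (Csub (u n) l) < eps.

Definition qpoch (a : Cx) (q : R) (n : nat) : Cx :=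
  Cprod (fun j => Csub C1 (Cmul a (RtoC (q ^ j)))) n.

(** q-binomial coefficient [m choose k]_q, for k <= m *)
Definition qbinom (q : R) (m k : nat) : Cx :=
  Cdiv (qpoch (RtoC q) q m)
       (Cmul (qpoch (RtoC q) q k) (qpoch (RtoC q) q (m - k))).

Definition h2D (q : R) (m n : nat) (z1 z2 : Cx) : Cx :=
  Csum (fun j =>
    Cmul (Cmul (Cmul (qbinom q m j) (qbinom q n j))
               (Cmul (RtoC (q ^ ((m - j) * (n - j)) * (-1) ^ j))
                     (qpoch (RtoC q) q j)))
         (Cmul (Cpow z1 (m - j)) (Cpow z2 (n - j))))
    (S (Nat.min m n)).

Definition Aq_partial (q : R) (z : Cx) (N : nat) : Cx :=
  Csum (fun n => Cmul (Cdiv (RtoC (q ^ (n * n))) (qpoch (RtoC q) q n))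
                      (Cpow (Copp z) n)) N.

(** general term of the double series of Corollary 7.2:
    q^{m^2-mn+n^2} h_{m,n}(z1,z2|q) c^m d^n / ((q,c z1 q;q)_m (q,d z2 q;q)_n)
    (m^2 - mn + n^2 = m*m + n*n - m*n is nonnegative, so nat subtraction is exact) *)
Definition cor72_term (q : R) (c d z1 z2 : Cx) (m n : nat) : Cx :=
  Cdiv (Cmul (Cmul (RtoC (q ^ (m * m + n * n - m * n))) (h2D q m n z1 z2))
             (Cmul (Cpow c m) (Cpow d n)))
       (Cmul (Cmul (qpoch (RtoC q) q m) (qpoch (Cmul (Cmul c z1) (RtoC q)) q m))
             (Cmul (qpoch (RtoC q) q n) (qpoch (Cmul (Cmul d z2) (RtoC q)) q n))).

(** Writing [m = j + a], [n = j + b] in the [j]-th summand of [h_(m,n)], the exponent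
    [m^2 - mn + n^2] becomes [j^2 + (a^2 + ja) + (b^2 + jb) - ab] and the factor [q^(ab)]
    cancels, so the general term factors as [w_j X_j(c z1, a) X_j(d z2, b)] with
    [w_j = q^(j^2) (-cd)^j / (q;q)_j] the [j]-th term of [A_q(cd)] and
    [X_j(x, a) = q^(a^2 + ja) x^a / ((q;q)_a (xq;q)_(j+a))].  By the Durfee-square identity
    [sum_a q^(a^2) y^a / ((q;q)_a (yq;q)_a) = 1/(yq;q)_oo] at [y = x q^j], divided by [(xq;q)_j],
    [sum_a X_j(x, a) = 1/(xq;q)_oo] for every [j].  All these series converge geometrically
    with ratio [q], uniformly in [j], while [w_j] decays like [q^(j^2)]; this justifies
    summing over [a] and [b] first and then over [j]. *)

From Stdlib Require Import Reals Lra Lia Field.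
From Coquelicot Require Complex.
Open Scope R_scope.

Lemma Cx_ext (z w : Cx) : Cre z = Cre w -> Cim z = Cim w -> z = w.
Proof. destruct z, w; simpl; intros; subst; reflexivity. Qed.

Lemma Cx_ring : ring_theory C0 C1 Cadd Cmul Csub Copp (@eq Cx).
Proof.
  constructor; intros; apply Cx_ext; unfold C0, C1, RtoC, Cadd, Cmul, Csub, Copp; simpl; ring.
Qed.

Lemma Cx_field : field_theory C0 C1 Cadd Cmul Csub Copp Cdiv Cinv (@eq Cx).
Proof.
  constructor.
  - exact Cx_ring.
  - intro H. injection H. lra.
  - reflexivity.
  - intros [a b] Hp. simpl in *.
    assert (Hn : a * a + b * b <> 0).
    { intro E. apply Hp. assert (a = 0) by nra. assert (b = 0) by nra. subst. reflexivity. }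
    apply Cx_ext; unfold C1, RtoC, Cmul, Cinv; simpl; field; exact Hn.
Qed.

Add Field Cxfield : Cx_field.

Definition toC (z : Cx) : Complex.C := (Cre z, Cim z).

Lemma Cnorm_toC z : Cnorm z = Complex.Cmod (toC z).
Proof. unfold Cnorm, Complex.Cmod, toC; simpl. f_equal. ring. Qed.

Lemma Cnorm_mul z w : Cnorm (Cmul z w) = Cnorm z * Cnorm w.
Proof. rewrite !Cnorm_toC. apply (Complex.Cmod_mult (toC z) (toC w)). Qed.

Lemma Cnorm_add z w : Cnorm (Cadd z w) <= Cnorm z + Cnorm w.
Proof. rewrite !Cnorm_toC. apply (Complex.Cmod_triangle (toC z) (toC w)). Qed.

Lemma Cnorm_ge0 z : 0 <= Cnorm z.
Proof. rewrite Cnorm_toC. apply Complex.Cmod_ge_0. Qed.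

Lemma Cnorm_R r : Cnorm (RtoC r) = Rabs r.
Proof. rewrite Cnorm_toC. apply (Complex.Cmod_R r). Qed.

Lemma Cnorm_opp z : Cnorm (Copp z) = Cnorm z.
Proof. rewrite !Cnorm_toC. apply (Complex.Cmod_opp (toC z)). Qed.

Lemma Cnorm_C0 : Cnorm C0 = 0.
Proof. unfold C0. rewrite Cnorm_R. apply Rabs_R0. Qed.

Lemma Cnorm_C1 : Cnorm C1 = 1.
Proof. unfold C1. rewrite Cnorm_R. apply Rabs_R1. Qed.

Lemma Cnorm_pos z : z <> C0 -> 0 < Cnorm z.
Proof.
  intro Hz. destruct (Cnorm_ge0 z) as [H|H]; [exact H|]. exfalso. apply Hz.
  rewrite Cnorm_toC in H. symmetry in H. apply Complex.Cmod_eq_0 in H.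
  unfold toC in H. injection H; intros. apply Cx_ext; simpl; auto.
Qed.

Lemma Cnorm_sub z w : Cnorm (Csub z w) <= Cnorm z + Cnorm w.
Proof. unfold Csub. rewrite <- (Cnorm_opp w). apply Cnorm_add. Qed.

Lemma Cnorm_sub_sym z w : Cnorm (Csub z w) = Cnorm (Csub w z).
Proof. replace (Csub z w) with (Copp (Csub w z)) by ring. apply Cnorm_opp. Qed.

Lemma Cnorm_sub_triangle a b c : Cnorm (Csub a c) <= Cnorm (Csub a b) + Cnorm (Csub b c).
Proof. replace (Csub a c) with (Cadd (Csub a b) (Csub b c)) by ring. apply Cnorm_add. Qed.

Lemma Cnorm_le_sub_add z l : Cnorm z <= Cnorm (Csub z l) + Cnorm l.
Proof.
  pose proof (Cnorm_sub_triangle z l C0) as H.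
  replace (Csub z C0) with z in H by ring. replace (Csub l C0) with l in H by ring. exact H.
Qed.

Lemma Cnorm_inv z : z <> C0 -> Cnorm (Cinv z) = / Cnorm z.
Proof.
  intro H. pose proof (Cnorm_pos z H).
  assert (E : Cnorm (Cinv z) * Cnorm z = 1).
  { rewrite <- Cnorm_mul, <- Cnorm_C1. f_equal. field. exact H. }
  field_simplify_eq; lra.
Qed.

Lemma Cnorm_div z w : w <> C0 -> Cnorm (Cdiv z w) = Cnorm z / Cnorm w.
Proof. intro H. unfold Cdiv. rewrite Cnorm_mul, Cnorm_inv by exact H. reflexivity. Qed.

Lemma Cnorm_pow z n : Cnorm (Cpow z n) = Cnorm z ^ n.
Proof. induction n; simpl. apply Cnorm_C1. rewrite Cnorm_mul, IHn. reflexivity. Qed.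

Lemma Rabs_Cre_le z : Rabs (Cre z) <= Cnorm z.
Proof.
  unfold Cnorm. rewrite <- sqrt_Rsqr_abs. apply sqrt_le_1_alt. unfold Rsqr.
  pose proof (Rle_0_sqr (Cim z)). unfold Rsqr in H. lra.
Qed.

Lemma Rabs_Cim_le z : Rabs (Cim z) <= Cnorm z.
Proof.
  unfold Cnorm. rewrite <- sqrt_Rsqr_abs. apply sqrt_le_1_alt. unfold Rsqr.
  pose proof (Rle_0_sqr (Cre z)). unfold Rsqr in H. lra.
Qed.

Lemma Cnorm_le_Rabs_parts z : Cnorm z <= Rabs (Cre z) + Rabs (Cim z).
Proof.
  assert (E : z = Cadd (RtoC (Cre z)) (Cmul (RtoC (Cim z)) (mkC 0 1))) by (apply Cx_ext; simpl; ring).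
  assert (Hi : Cnorm (mkC 0 1) = 1).
  { unfold Cnorm; simpl. replace (0 * 0 + 1 * 1) with 1 by ring. apply sqrt_1. }
  rewrite E at 1. eapply Rle_trans; [apply Cnorm_add|].
  rewrite Cnorm_mul, !Cnorm_R, Hi. simpl. lra.
Qed.

Lemma Cmul_neq0 z w : z <> C0 -> w <> C0 -> Cmul z w <> C0.
Proof.
  intros Hz Hw H. apply Cnorm_pos in Hz. apply Cnorm_pos in Hw.
  assert (E : Cnorm (Cmul z w) = 0) by (rewrite H; apply Cnorm_C0).
  rewrite Cnorm_mul in E. nra.
Qed.

Lemma Cmul_neq0_r z w : Cmul z w <> C0 -> w <> C0.
Proof. intros H E. apply H. subst. ring. Qed.

Lemma RtoC_mul a b : RtoC (a * b) = Cmul (RtoC a) (RtoC b).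
Proof. apply Cx_ext; simpl; ring. Qed.
Lemma RtoC_add a b : RtoC (a + b) = Cadd (RtoC a) (RtoC b).
Proof. apply Cx_ext; simpl; ring. Qed.
Lemma RtoC_inv a : a <> 0 -> RtoC (/ a) = Cinv (RtoC a).
Proof. intro. apply Cx_ext; simpl; field; auto. Qed.
Lemma RtoC_neq0 a : a <> 0 -> RtoC a <> C0.
Proof. intros H E. injection E. auto. Qed.

Lemma Cpow_add z m n : Cpow z (m + n) = Cmul (Cpow z m) (Cpow z n).
Proof. induction m; simpl. ring. rewrite IHm. ring. Qed.
Lemma Cpow_mul z w n : Cpow (Cmul z w) n = Cmul (Cpow z n) (Cpow w n).
Proof. induction n; simpl. ring. rewrite IHn. ring. Qed.
Lemma Cpow_R r n : Cpow (RtoC r) n = RtoC (r ^ n).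
Proof. induction n; simpl. reflexivity. rewrite IHn, RtoC_mul. reflexivity. Qed.

Lemma pow_le1 x n : 0 <= x <= 1 -> x ^ n <= 1.
Proof. intro H. induction n; simpl. lra. pose proof (pow_le x n). nra. Qed.

Lemma pow_decr x m n : 0 <= x <= 1 -> (m <= n)%nat -> x ^ n <= x ^ m.
Proof.
  intros H Hmn. replace n with (m + (n - m))%nat by lia. rewrite pow_add.
  pose proof (pow_le x m (proj1 H)). pose proof (pow_le1 x (n - m) H). nra.
Qed.

Lemma pow_sub_mul x m j : (j <= m)%nat -> x ^ (m - j) * x ^ j = x ^ m.
Proof. intro H. rewrite <- pow_add. f_equal. lia. Qed.

Lemma Rdiv_le_0_compat a b : 0 <= a -> 0 < b -> 0 <= a / b.
Proof. intros. unfold Rdiv. apply Rmult_le_pos; auto. apply Rlt_le, Rinv_0_lt_compat; auto. Qed.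

Lemma pow_lt_eps r C eps : 0 <= r < 1 -> 0 < eps -> exists n, C * r ^ n < eps.
Proof.
  intros Hr He.
  destruct (pow_lt_1_zero r ltac:(rewrite Rabs_pos_eq; lra) (eps / (Rabs C + 1))) as [N HN].
  { apply Rdiv_lt_0_compat; try lra. pose proof (Rabs_pos C); lra. }
  exists N. specialize (HN N (le_n _)). rewrite Rabs_pos_eq in HN by (apply pow_le; lra).
  pose proof (Rabs_pos C). pose proof (Rle_abs C). pose proof (pow_le r N (proj1 Hr)).
  apply Rmult_lt_compat_l with (r := Rabs C + 1) in HN; [|lra].
  replace ((Rabs C + 1) * (eps / (Rabs C + 1))) with eps in HN by (field; lra). nra.
Qed.

Lemma pow_sq_mul_pow_le_geom q Y r : 0 < q < 1 -> 0 <= Y -> 0 < r ->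
  exists M, 0 <= M /\ forall a, q ^ (a * a) * Y ^ a <= M * r ^ a.
Proof.
  intros Hq HY Hr. set (y := Y / r).
  assert (Hy : 0 <= y) by (apply Rdiv_le_0_compat; lra).
  destruct (pow_lt_eps q y 1 ltac:(lra) ltac:(lra)) as [K HK].
  exists ((1 + y) ^ K). split; [apply pow_le; lra|]. intro a.
  assert (Hya : Y ^ a = y ^ a * r ^ a).
  { rewrite <- Rpow_mult_distr. unfold y. f_equal. field. lra. }
  rewrite Hya, <- Rmult_assoc. apply Rmult_le_compat_r; [apply pow_le; lra|].
  assert (1 <= (1 + y) ^ K) by (apply pow_R1_Rle; lra).
  destruct (Compare_dec.le_lt_dec K a).
  - rewrite pow_mult, <- Rpow_mult_distr.
    assert (q ^ a * y <= 1) by (pose proof (pow_decr q K a ltac:(lra) l); nra).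
    assert (0 <= q ^ a * y) by (apply Rmult_le_pos; auto; apply pow_le; lra).
    pose proof (pow_le1 (q ^ a * y) a ltac:(lra)). lra.
  - assert (q ^ (a * a) <= 1) by (apply pow_le1; lra).
    assert (y ^ a <= (1 + y) ^ a) by (apply pow_incr; lra).
    assert ((1 + y) ^ a <= (1 + y) ^ K) by (apply Rle_pow; lia || lra).
    pose proof (pow_le y a Hy). pose proof (pow_le q (a * a) ltac:(lra)). nra.
Qed.

Lemma Csum_ext f g n : (forall k, (k < n)%nat -> f k = g k) -> Csum f n = Csum g n.
Proof. induction n; intro H; simpl. auto. rewrite IHn by (intros; apply H; lia). rewrite H by lia. auto. Qed.
Lemma Rsum_ext f g n : (forall k, (k < n)%nat -> f k = g k) -> Rsum f n = Rsum g n.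
Proof. induction n; intro H; simpl. auto. rewrite IHn by (intros; apply H; lia). rewrite H by lia. auto. Qed.
Lemma Rsum_le f g n : (forall k, (k < n)%nat -> f k <= g k) -> Rsum f n <= Rsum g n.
Proof.
  induction n; intro H; simpl. lra.
  assert (Rsum f n <= Rsum g n) by (apply IHn; intros; apply H; lia).
  specialize (H n ltac:(lia)). lra.
Qed.
Lemma Rsum_scal a f n : Rsum (fun k => a * f k) n = a * Rsum f n.
Proof. induction n; simpl. ring. rewrite IHn. ring. Qed.
Lemma Rsum_geom r n : 0 <= r < 1 -> Rsum (fun k => r ^ k) n = (1 - r ^ n) / (1 - r).
Proof. intro H. induction n; simpl. field. lra. rewrite IHn. field. lra. Qed.
Lemma Rsum_geom_le r n : 0 <= r < 1 -> Rsum (fun k => r ^ k) n <= / (1 - r).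
Proof.
  intro H. rewrite Rsum_geom by auto. pose proof (pow_le r n (proj1 H)).
  unfold Rdiv. rewrite <- (Rmult_1_l (/ (1 - r))) at 2.
  apply Rmult_le_compat_r; [apply Rlt_le, Rinv_0_lt_compat|]; lra.
Qed.
Lemma Rsum_geom_ge0 r n : 0 <= r -> 0 <= Rsum (fun k => r ^ k) n.
Proof. intro H. induction n; simpl. lra. pose proof (pow_le r n H). lra. Qed.

Lemma Csum_add f g n : Csum (fun k => Cadd (f k) (g k)) n = Cadd (Csum f n) (Csum g n).
Proof. induction n; simpl. apply Cx_ext; simpl; ring. rewrite IHn. ring. Qed.
Lemma Csum_sub f g n : Csum (fun k => Csub (f k) (g k)) n = Csub (Csum f n) (Csum g n).
Proof. induction n; simpl. apply Cx_ext; simpl; ring. rewrite IHn. ring. Qed.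
Lemma Csum_scal a f n : Csum (fun k => Cmul a (f k)) n = Cmul a (Csum f n).
Proof. induction n; simpl. apply Cx_ext; simpl; ring. rewrite IHn. ring. Qed.
Lemma Csum_scal_r a f n : Csum (fun k => Cmul (f k) a) n = Cmul (Csum f n) a.
Proof. induction n; simpl. apply Cx_ext; simpl; ring. rewrite IHn. ring. Qed.
Lemma Csum_first f n : Csum f (S n) = Cadd (f 0%nat) (Csum (fun k => f (S k)) n).
Proof. induction n; simpl. apply Cx_ext; simpl; ring. simpl in IHn. rewrite IHn. ring. Qed.
Lemma Csum_zero f n : (forall k, (k < n)%nat -> f k = C0) -> Csum f n = C0.
Proof. induction n; intro H; simpl. auto. rewrite IHn, H by (intros; try apply H; lia). ring. Qed.
Lemma Csum_swap (f : nat -> nat -> Cx) n m :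
  Csum (fun i => Csum (fun j => f i j) m) n = Csum (fun j => Csum (fun i => f i j) n) m.
Proof.
  induction n; simpl. symmetry; apply Csum_zero; auto.
  rewrite IHn, <- Csum_add. reflexivity.
Qed.
Lemma Csum_norm f n : Cnorm (Csum f n) <= Rsum (fun k => Cnorm (f k)) n.
Proof.
  induction n; simpl. rewrite Cnorm_C0; lra.
  eapply Rle_trans. apply Cnorm_add. lra.
Qed.
Lemma Csum_split f m n : Csum f (m + n) = Cadd (Csum f m) (Csum (fun k => f (m + k)%nat) n).
Proof.
  induction n; simpl. rewrite Nat.add_0_r. ring.
  rewrite Nat.add_succ_r. simpl. rewrite IHn. ring.
Qed.

Lemma Csum_pad g k N : (k <= N)%nat ->
  Csum g k = Csum (fun j => if Nat.ltb j k then g j else C0) N.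
Proof.
  intro H. replace N with (k + (N - k))%nat by lia. rewrite Csum_split.
  rewrite (Csum_zero (fun i => if Nat.ltb (k + i) k then g (k + i)%nat else C0)).
  2:{ intros i _. replace (Nat.ltb (k + i) k) with false by (symmetry; apply Nat.ltb_ge; lia). auto. }
  rewrite (Csum_ext (fun j => if Nat.ltb j k then g j else C0) g).
  - ring.
  - intros i Hi. replace (Nat.ltb i k) with true by (symmetry; apply Nat.ltb_lt; lia). auto.
Qed.

Lemma Csum_shift g j N :
  Csum (fun m => if Nat.leb j m then g (m - j)%nat else C0) N = Csum g (N - j).
Proof.
  destruct (Compare_dec.le_lt_dec j N).
  - replace N with (j + (N - j))%nat at 1 by lia. rewrite Csum_split.
    rewrite Csum_zero.
    2:{ intros i Hi. replace (Nat.leb j i) with false by (symmetry; apply Nat.leb_gt; lia). auto. }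
    rewrite (Csum_ext _ g). ring.
    intros i Hi. replace (Nat.leb j (j + i)) with true by (symmetry; apply Nat.leb_le; lia). f_equal; lia.
  - replace (N - j)%nat with O by lia. simpl. apply Csum_zero. intros i Hi.
    replace (Nat.leb j i) with false by (symmetry; apply Nat.leb_gt; lia). auto.
Qed.

(** Substituting [m = j + a], [n = j + b] in a square of side [N]. *)
Lemma Csum_diag_reindex (f : nat -> nat -> nat -> Cx) N :
  Csum (fun m => Csum (fun n => Csum (fun j => f j (m - j)%nat (n - j)%nat) (S (Nat.min m n))) N) N
  = Csum (fun j => Csum (fun a => Csum (fun b => f j a b) (N - j)) (N - j)) N.
Proof.
  set (g j m n := if Nat.leb j m then (if Nat.leb j n then f j (m - j)%nat (n - j)%nat else C0) else C0).
  rewrite (Csum_ext _ (fun m => Csum (fun n => Csum (fun j => g j m n) N) N)).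
  2:{ intros m Hm. apply Csum_ext. intros n Hn. rewrite (Csum_pad _ _ N) by lia.
      apply Csum_ext. intros j Hj. unfold g.
      destruct (Nat.ltb_spec j (S (Nat.min m n))), (Nat.leb_spec j m), (Nat.leb_spec j n); auto; lia. }
  rewrite (Csum_ext _ (fun m => Csum (fun j => Csum (fun n => g j m n) N) N)) by (intros; apply Csum_swap).
  rewrite Csum_swap. apply Csum_ext. intros j Hj.
  rewrite (Csum_ext _ (fun m => if Nat.leb j m then Csum (fun b => f j (m - j)%nat b) (N - j) else C0)).
  - apply (Csum_shift (fun a => Csum (fun b => f j a b) (N - j))).
  - intros m Hm. unfold g. destruct (Nat.leb j m).
    + rewrite <- Csum_shift. reflexivity.
    + apply Csum_zero; auto.
Qed.

Definition cv_geom (r C : R) (u : nat -> Cx) (l : Cx) : Prop :=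
  forall n, Cnorm (Csub (u n) l) <= C * r ^ n.

Lemma cv_geom_nonneg r C u l : cv_geom r C u l -> 0 <= C.
Proof. intro H. specialize (H O). simpl in H. pose proof (Cnorm_ge0 (Csub (u O) l)). lra. Qed.

Lemma cv_geom_C_cv r C u l : 0 <= r < 1 -> cv_geom r C u l -> C_cv u l.
Proof.
  intros Hr H eps Heps. destruct (pow_lt_eps r C eps Hr Heps) as [N HN].
  pose proof (cv_geom_nonneg _ _ _ _ H).
  exists N. intros n Hn. eapply Rle_lt_trans; [apply H|].
  pose proof (pow_decr r N n ltac:(lra) Hn). nra.
Qed.

Lemma C_cv_dist_le u l x B N :
  C_cv u l -> (forall m, (m >= N)%nat -> Cnorm (Csub x (u m)) <= B) -> Cnorm (Csub x l) <= B.
Proof.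
  intros Hu Hx. apply Rle_plus_epsilon. intros eps He.
  destruct (Hu eps He) as [M HM]. specialize (HM (N + M)%nat ltac:(lia)).
  specialize (Hx (N + M)%nat ltac:(lia)).
  pose proof (Cnorm_sub_triangle x (u (N + M)%nat) l). lra.
Qed.

Lemma C_cv_norm_ge u l delta : C_cv u l -> (forall n, delta <= Cnorm (u n)) -> delta <= Cnorm l.
Proof.
  intros Hu Hd. apply Rle_plus_epsilon. intros eps He.
  destruct (Hu eps He) as [N HN]. specialize (HN N (le_n _)).
  pose proof (Cnorm_le_sub_add (u N) l). specialize (Hd N). lra.
Qed.

Lemma Cx_complete u :
  (forall eps, 0 < eps -> exists N, forall n m, (n >= N)%nat -> (m >= N)%nat ->
     Cnorm (Csub (u n) (u m)) < eps) ->
  exists l, C_cv u l.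
Proof.
  intro Hc.
  assert (CR : Cauchy_crit (fun n => Cre (u n))).
  { intros eps Heps. destruct (Hc eps Heps) as [N HN]. exists N. intros n m Hn Hm.
    eapply Rle_lt_trans; [|apply (HN n m Hn Hm)]. apply (Rabs_Cre_le (Csub (u n) (u m))). }
  assert (CI : Cauchy_crit (fun n => Cim (u n))).
  { intros eps Heps. destruct (Hc eps Heps) as [N HN]. exists N. intros n m Hn Hm.
    eapply Rle_lt_trans; [|apply (HN n m Hn Hm)]. apply (Rabs_Cim_le (Csub (u n) (u m))). }
  destruct (R_complete _ CR) as [lr Hlr]. destruct (R_complete _ CI) as [li Hli].
  exists (mkC lr li). intros eps Heps.
  destruct (Hlr (eps / 2) ltac:(lra)) as [N1 H1]. destruct (Hli (eps / 2) ltac:(lra)) as [N2 H2].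
  exists (N1 + N2)%nat. intros n Hn.
  specialize (H1 n ltac:(lia)). specialize (H2 n ltac:(lia)). unfold Rdist in H1, H2.
  eapply Rle_lt_trans; [apply Cnorm_le_Rabs_parts|]. simpl.
  replace (Cre (u n) + - lr) with (Cre (u n) - lr) by ring.
  replace (Cim (u n) + - li) with (Cim (u n) - li) by ring. lra.
Qed.

Lemma increments_geom_dist u C r : 0 <= r < 1 ->
  (forall n, Cnorm (Csub (u (S n)) (u n)) <= C * r ^ n) ->
  forall n m, (n <= m)%nat -> Cnorm (Csub (u m) (u n)) <= C * r ^ n / (1 - r).
Proof.
  intros Hr H n m Hnm. replace m with (n + (m - n))%nat by lia. generalize (m - n)%nat as k.
  assert (HC : 0 <= C) by (specialize (H O); simpl in H; pose proof (Cnorm_ge0 (Csub (u 1%nat) (u O))); lra).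
  intro k.
  assert (Hk : Cnorm (Csub (u (n + k)%nat) (u n)) <= C * r ^ n * Rsum (fun i => r ^ i) k).
  { induction k; simpl.
    - rewrite Nat.add_0_r. replace (Csub (u n) (u n)) with C0 by ring. rewrite Cnorm_C0. lra.
    - rewrite Nat.add_succ_r. eapply Rle_trans; [apply (Cnorm_sub_triangle _ (u (n + k)%nat))|].
      specialize (H (n + k)%nat). rewrite pow_add in H. lra. }
  eapply Rle_trans; [exact Hk|]. unfold Rdiv. apply Rmult_le_compat_l.
  - pose proof (pow_le r n (proj1 Hr)). nra.
  - apply Rsum_geom_le; exact Hr.
Qed.

Lemma cv_geom_of_increments u C r : 0 <= r < 1 ->
  (forall n, Cnorm (Csub (u (S n)) (u n)) <= C * r ^ n) ->
  exists l, cv_geom r (C / (1 - r)) u l.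
Proof.
  intros Hr H. pose proof (increments_geom_dist u C r Hr H) as Hd.
  destruct (Cx_complete u) as [l Hl].
  - intros eps Heps. destruct (pow_lt_eps r (2 * C / (1 - r)) eps Hr Heps) as [N HN].
    exists N. intros n m Hn Hm.
    pose proof (Hd N n Hn). pose proof (Hd N m Hm).
    rewrite Cnorm_sub_sym in H1.
    pose proof (Cnorm_sub_triangle (u n) (u N) (u m)).
    replace (2 * C / (1 - r) * r ^ N) with (C * r ^ N / (1 - r) + C * r ^ N / (1 - r)) in HN
      by (field; lra).
    lra.
  - exists l. intro n. replace (C / (1 - r) * r ^ n) with (C * r ^ n / (1 - r)) by (field; lra).
    apply (C_cv_dist_le u l (u n) _ n Hl). intros m Hm.
    rewrite Cnorm_sub_sym. apply Hd. lia.
Qed.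

Lemma cv_geom_shift r C u l : 0 < r ->
  cv_geom r C (fun n => u (S n)) l -> cv_geom r (C / r + Cnorm (Csub (u O) l)) u l.
Proof.
  intros Hr H. pose proof (cv_geom_nonneg _ _ _ _ H) as HC.
  assert (HCr : 0 <= C / r) by (apply Rdiv_le_0_compat; lra).
  intros [|n].
  - simpl. lra.
  - eapply Rle_trans; [apply H|]. pose proof (pow_le r n (Rlt_le _ _ Hr)).
    pose proof (Cnorm_ge0 (Csub (u O) l)).
    replace (C * r ^ n) with (C / r * r ^ S n) by (simpl; field; lra).
    apply Rmult_le_compat_r; [simpl; nra | lra].
Qed.

Lemma cv_geom_mul r C1 C2 u v l1 l2 : 0 <= r <= 1 ->
  cv_geom r C1 u l1 -> cv_geom r C2 v l2 ->
  cv_geom r (C1 * (Cnorm l2 + C2) + Cnorm l1 * C2) (fun n => Cmul (u n) (v n)) (Cmul l1 l2).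
Proof.
  intros Hr Hu Hv n.
  pose proof (cv_geom_nonneg _ _ _ _ Hv) as HC2.
  specialize (Hu n). specialize (Hv n).
  replace (Csub (Cmul (u n) (v n)) (Cmul l1 l2))
    with (Cadd (Cmul (Csub (u n) l1) (v n)) (Cmul l1 (Csub (v n) l2))) by ring.
  eapply Rle_trans; [apply Cnorm_add|]. rewrite !Cnorm_mul.
  pose proof (pow_le r n (proj1 Hr)). pose proof (pow_le1 r n Hr).
  assert (Hvn : Cnorm (v n) <= Cnorm l2 + C2).
  { pose proof (Cnorm_le_sub_add (v n) l2). assert (C2 * r ^ n <= C2) by nra. lra. }
  pose proof (Cnorm_ge0 (Csub (u n) l1)). pose proof (Cnorm_ge0 (v n)). pose proof (Cnorm_ge0 l1).
  assert (Cnorm (Csub (u n) l1) * Cnorm (v n) <= C1 * r ^ n * (Cnorm l2 + C2))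
    by (apply Rmult_le_compat; auto).
  assert (Cnorm l1 * Cnorm (Csub (v n) l2) <= Cnorm l1 * (C2 * r ^ n))
    by (apply Rmult_le_compat_l; auto).
  nra.
Qed.

Lemma Cinv_sub_norm_le u v delta : 0 < delta -> delta <= Cnorm u -> delta <= Cnorm v ->
  Cnorm (Csub (Cinv u) (Cinv v)) <= Cnorm (Csub u v) / (delta * delta).
Proof.
  intros Hd Hu Hv.
  assert (u <> C0) by (intro E; subst; rewrite Cnorm_C0 in Hu; lra).
  assert (v <> C0) by (intro E; subst; rewrite Cnorm_C0 in Hv; lra).
  replace (Csub (Cinv u) (Cinv v)) with (Cmul (Csub v u) (Cmul (Cinv u) (Cinv v))) by (field; auto).
  rewrite !Cnorm_mul, !Cnorm_inv, Cnorm_sub_sym by auto.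
  unfold Rdiv. apply Rmult_le_compat_l; [apply Cnorm_ge0|].
  rewrite Rinv_mult. apply Rmult_le_compat; try (apply Rlt_le, Rinv_0_lt_compat; lra);
  apply Rinv_le_contravar; lra.
Qed.

Lemma cv_geom_inv r C u l delta : 0 < delta ->
  (forall n, delta <= Cnorm (u n)) -> delta <= Cnorm l ->
  cv_geom r C u l -> cv_geom r (C / (delta * delta)) (fun n => Cinv (u n)) (Cinv l).
Proof.
  intros Hd Hu Hl H n. eapply Rle_trans; [apply (Cinv_sub_norm_le _ _ delta); auto|].
  unfold Rdiv. replace (C * / (delta * delta) * r ^ n) with (C * r ^ n * / (delta * delta)) by ring.
  apply Rmult_le_compat_r; [apply Rlt_le, Rinv_0_lt_compat; nra | apply H].
Qed.

(** The rate [r * r] for the weights makes [|w j| r^(N-j) <= W r^N r^j] summable in [j]. *)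
Lemma cv_geom_convolution r W CA D (w : nat -> Cx) (s : nat -> nat -> Cx) A L :
  0 <= r < 1 ->
  (forall j, Cnorm (w j) <= W * (r * r) ^ j) ->
  cv_geom r CA (Csum w) A ->
  (forall j, cv_geom r D (s j) L) ->
  cv_geom r (W * D / (1 - r) + CA * Cnorm L)
    (fun N => Csum (fun j => Cmul (w j) (s j (N - j)%nat)) N) (Cmul A L).
Proof.
  intros Hr Hw HA Hs N.
  assert (HW : 0 <= W) by (specialize (Hw O); simpl in Hw; pose proof (Cnorm_ge0 (w O)); lra).
  assert (HD : 0 <= D) by exact (cv_geom_nonneg _ _ _ _ (Hs O)).
  replace (Csub (Csum (fun j => Cmul (w j) (s j (N - j)%nat)) N) (Cmul A L))
    with (Cadd (Csum (fun j => Cmul (w j) (Csub (s j (N - j)%nat) L)) N) (Cmul (Csub (Csum w N) A) L)).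
  2:{ rewrite (Csum_ext (fun j => Cmul (w j) (Csub (s j (N - j)%nat) L))
          (fun j => Csub (Cmul (w j) (s j (N - j)%nat)) (Cmul (w j) L))) by (intros; ring).
      rewrite Csum_sub, Csum_scal_r. ring. }
  eapply Rle_trans; [apply Cnorm_add|]. rewrite Rmult_plus_distr_r. apply Rplus_le_compat.
  - eapply Rle_trans; [apply Csum_norm|].
    apply Rle_trans with (Rsum (fun j => W * D * r ^ N * r ^ j) N).
    + apply Rsum_le. intros j Hj. rewrite Cnorm_mul.
      assert (E : (r * r) ^ j * r ^ (N - j) = r ^ N * r ^ j).
      { rewrite Rpow_mult_distr, <- (pow_sub_mul r N j) by lia. ring. }
      pose proof (Hw j). pose proof (Hs j (N - j)%nat).
      apply Rle_trans with (W * (r * r) ^ j * (D * r ^ (N - j))).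
      * apply Rmult_le_compat; auto using Cnorm_ge0.
      * right. replace (W * (r * r) ^ j * (D * r ^ (N - j))) with (W * D * ((r * r) ^ j * r ^ (N - j)))
          by ring. rewrite E. ring.
    + rewrite Rsum_scal. unfold Rdiv.
      replace (W * D * / (1 - r) * r ^ N) with (W * D * r ^ N * / (1 - r)) by ring.
      apply Rmult_le_compat_l; [apply Rmult_le_pos; [nra | apply pow_le; lra] | apply Rsum_geom_le; lra].
  - rewrite Cnorm_mul. replace (CA * Cnorm L * r ^ N) with (CA * r ^ N * Cnorm L) by ring.
    apply Rmult_le_compat_r; [apply Cnorm_ge0 | apply HA].
Qed.

Lemma Cnorm_1_sub_ge z : 1 - Cnorm z <= Cnorm (Csub C1 z).
Proof.
  pose proof (Cnorm_sub_triangle C1 (Csub C1 z) C0) as H.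
  replace (Csub C1 C0) with C1 in H by ring. replace (Csub (Csub C1 z) C0) with (Csub C1 z) in H by ring.
  replace (Csub C1 (Csub C1 z)) with z in H by ring. rewrite Cnorm_C1 in H. lra.
Qed.

Lemma Cnorm_1_sub_le z : Cnorm (Csub C1 z) <= 1 + Cnorm z.
Proof. pose proof (Cnorm_sub C1 z). rewrite Cnorm_C1 in H. lra. Qed.

Lemma exp_le_compat x y : x <= y -> exp x <= exp y.
Proof. intros [H|H]; [left; apply exp_increasing; exact H | subst; lra]. Qed.

Lemma qpoch_0 a q : qpoch a q 0 = C1.
Proof. reflexivity. Qed.

Lemma qpoch_S a q n : qpoch a q (S n) = Cmul (qpoch a q n) (Csub C1 (Cmul a (RtoC (q ^ n)))).
Proof. reflexivity. Qed.

Lemma qpoch_add a q m n :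
  qpoch a q (m + n) = Cmul (qpoch a q m) (qpoch (Cmul a (RtoC (q ^ m))) q n).
Proof.
  induction n.
  - rewrite Nat.add_0_r, qpoch_0. ring.
  - rewrite Nat.add_succ_r, !qpoch_S, IHn, pow_add, RtoC_mul. ring.
Qed.

Lemma qpoch_S_left a q n : qpoch a q (S n) = Cmul (Csub C1 a) (qpoch (Cmul a (RtoC q)) q n).
Proof.
  change (S n) with (1 + n)%nat. rewrite qpoch_add, qpoch_S, qpoch_0.
  replace (q ^ 1) with q by ring. replace (q ^ 0) with 1 by ring.
  f_equal. change (RtoC 1) with C1. ring.
Qed.

Lemma qpoch_neq0 a q n :
  (forall j, Csub C1 (Cmul a (RtoC (q ^ j))) <> C0) -> qpoch a q n <> C0.
Proof.
  intro H. induction n.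
  - rewrite qpoch_0. intro E; injection E; lra.
  - rewrite qpoch_S. apply Cmul_neq0; auto.
Qed.

Lemma qpoch_norm_le a q n : 0 < q < 1 -> Cnorm (qpoch a q n) <= exp (Cnorm a / (1 - q)).
Proof.
  intro Hq.
  assert (H : Cnorm (qpoch a q n) <= exp (Cnorm a * Rsum (fun j => q ^ j) n)).
  { induction n; cbn [Rsum].
    - rewrite qpoch_0, Cnorm_C1, Rmult_0_r, exp_0. lra.
    - rewrite qpoch_S, Cnorm_mul, Rmult_plus_distr_l, exp_plus.
      pose proof (Cnorm_1_sub_le (Cmul a (RtoC (q ^ n)))) as H.
      rewrite Cnorm_mul, Cnorm_R, Rabs_pos_eq in H by (apply pow_le; lra).
      pose proof (exp_ineq1_le (Cnorm a * q ^ n)).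
      apply Rmult_le_compat; try apply Cnorm_ge0; lra. }
  eapply Rle_trans; [exact H|]. apply exp_le_compat. unfold Rdiv.
  apply Rmult_le_compat_l; [apply Cnorm_ge0 | apply Rsum_geom_le; lra].
Qed.

Lemma qpoch_norm_ge_small b q n : 0 < q < 1 -> Cnorm b <= 1 ->
  1 - Cnorm b * Rsum (fun j => q ^ j) n <= Cnorm (qpoch b q n).
Proof.
  intros Hq Hb. induction n; cbn [Rsum].
  - rewrite qpoch_0, Cnorm_C1. lra.
  - rewrite qpoch_S, Cnorm_mul. pose proof (Cnorm_1_sub_ge (Cmul b (RtoC (q ^ n)))) as H.
    rewrite Cnorm_mul, Cnorm_R, Rabs_pos_eq in H by (apply pow_le; lra).
    assert (q ^ n <= 1) by (apply pow_le1; lra). pose proof (pow_le q n ltac:(lra)).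
    pose proof (Cnorm_ge0 b). pose proof (Rsum_geom_ge0 q n ltac:(lra)).
    set (S := Rsum (fun j => q ^ j) n) in *. set (Y := Cnorm (Csub C1 (Cmul b (RtoC (q ^ n))))) in *.
    set (X := Cnorm (qpoch b q n)) in *. set (B := Cnorm b) in *. set (Q := q ^ n) in *.
    assert (0 <= Y) by apply Cnorm_ge0. assert (0 <= X) by apply Cnorm_ge0.
    assert (0 <= B * Q) by (apply Rmult_le_pos; lra). assert (0 <= B * S) by (apply Rmult_le_pos; lra).
    rewrite Rmult_plus_distr_l.
    destruct (Rle_dec (1 - B * S) 0).
    + assert (0 <= X * Y) by (apply Rmult_le_pos; lra). lra.
    + assert (1 - B * Q >= 0) by nra.
      assert ((1 - B * S) * (1 - B * Q) <= X * Y) by (apply Rmult_le_compat; lra). nra.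
Qed.

(** Beyond the index [K] where [|a| q^K <= (1-q)/2] the tail product stays above [1/2];
    the finitely many earlier factors are nonzero by hypothesis. *)
Lemma qpoch_norm_lower a q : 0 < q < 1 -> (forall j, Csub C1 (Cmul a (RtoC (q ^ j))) <> C0) ->
  exists delta, 0 < delta /\ forall n, delta <= Cnorm (qpoch a q n).
Proof.
  intros Hq Hnz.
  destruct (pow_lt_eps q (Cnorm a) ((1 - q) / 2) ltac:(lra) ltac:(lra)) as [K HK].
  assert (HaK : Cnorm (Cmul a (RtoC (q ^ K))) = Cnorm a * q ^ K)
    by (rewrite Cnorm_mul, Cnorm_R, Rabs_pos_eq by (apply pow_le; lra); reflexivity).
  assert (Htail : forall n, 1 / 2 <= Cnorm (qpoch (Cmul a (RtoC (q ^ K))) q n)).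
  { intro n. eapply Rle_trans; [|apply qpoch_norm_ge_small; [exact Hq | rewrite HaK; lra]].
    rewrite HaK. pose proof (Rsum_geom_le q n ltac:(lra)).
    assert (0 <= Cnorm a * q ^ K) by (rewrite <- HaK; apply Cnorm_ge0).
    assert (Cnorm a * q ^ K * Rsum (fun j => q ^ j) n <= (1 - q) / 2 * / (1 - q)).
    { apply Rmult_le_compat; try lra. apply Rsum_geom_ge0; lra. }
    replace ((1 - q) / 2 * / (1 - q)) with (1 / 2) in H1 by (field; lra). lra. }
  assert (Hhead : forall K0, exists d, 0 < d /\ forall n, (n <= K0)%nat -> d <= Cnorm (qpoch a q n)).
  { induction K0 as [|K0 [d [Hd Hn]]].
    - exists 1. split; [lra|]. intros n Hn. replace n with O by lia. rewrite qpoch_0, Cnorm_C1. lra.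
    - pose proof (Cnorm_pos _ (qpoch_neq0 a q (S K0) Hnz)).
      exists (Rmin d (Cnorm (qpoch a q (S K0)))). split; [apply Rmin_pos; auto|].
      intros n Hn'. destruct (Nat.eq_dec n (S K0)).
      + subst. apply Rmin_r.
      + eapply Rle_trans; [apply Rmin_l | apply Hn; lia]. }
  destruct (Hhead K) as [d [Hd Hdn]].
  exists (d / 2). split; [lra|]. intro n.
  destruct (Compare_dec.le_lt_dec n K) as [Hn|Hn]; [specialize (Hdn n Hn); lra|].
  replace n with (K + (n - K))%nat by lia. rewrite qpoch_add, Cnorm_mul.
  specialize (Hdn K (le_n _)). specialize (Htail (n - K)%nat).
  apply Rle_trans with (d * (1 / 2)); [lra | apply Rmult_le_compat; lra].
Qed.

Lemma qpoch_cv a q : 0 < q < 1 -> exists P C, cv_geom q C (qpoch a q) P.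
Proof.
  intro Hq. set (M := exp (Cnorm a / (1 - q))).
  destruct (cv_geom_of_increments (qpoch a q) (M * Cnorm a) q ltac:(lra)) as [P HP].
  - intro n. rewrite qpoch_S.
    replace (Csub (Cmul (qpoch a q n) (Csub C1 (Cmul a (RtoC (q ^ n))))) (qpoch a q n))
      with (Copp (Cmul (qpoch a q n) (Cmul a (RtoC (q ^ n))))) by ring.
    rewrite Cnorm_opp, !Cnorm_mul, Cnorm_R, Rabs_pos_eq by (apply pow_le; lra).
    pose proof (qpoch_norm_le a q n Hq).
    rewrite <- Rmult_assoc. apply Rmult_le_compat_r; [apply pow_le; lra|].
    apply Rmult_le_compat_r; [apply Cnorm_ge0 | exact H].
  - exists P, (M * Cnorm a / (1 - q)). exact HP.
Qed.

Lemma qpoch_cv_nonvanishing a q : 0 < q < 1 ->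
  (forall j, Csub C1 (Cmul a (RtoC (q ^ j))) <> C0) ->
  exists P C delta, 0 < delta /\ cv_geom q C (qpoch a q) P /\
    (forall n, delta <= Cnorm (qpoch a q n)) /\ delta <= Cnorm P.
Proof.
  intros Hq Hnz.
  destruct (qpoch_cv a q Hq) as [P [C HP]].
  destruct (qpoch_norm_lower a q Hq Hnz) as [delta [Hd Hdn]].
  exists P, C, delta. repeat split; auto.
  exact (C_cv_norm_ge _ _ _ (cv_geom_C_cv q C _ _ ltac:(lra) HP) Hdn).
Qed.

Fixpoint qfactR (q : R) (n : nat) : R :=
  match n with O => 1 | S k => qfactR q k * (1 - q * q ^ k) end.

Lemma qfactR_pos q n : 0 < q < 1 -> 0 < qfactR q n.
Proof.
  intro Hq. induction n; simpl; [lra|]. apply Rmult_lt_0_compat; auto.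
  pose proof (pow_le1 q n ltac:(lra)). pose proof (pow_le q n ltac:(lra)). nra.
Qed.

Lemma qpoch_q_qfactR q n : qpoch (RtoC q) q n = RtoC (qfactR q n).
Proof. induction n; [reflexivity|]. rewrite qpoch_S, IHn. apply Cx_ext; simpl; ring. Qed.

Lemma qpoch_q_neq0 q n : 0 < q < 1 -> qpoch (RtoC q) q n <> C0.
Proof. intro Hq. rewrite qpoch_q_qfactR. apply RtoC_neq0. pose proof (qfactR_pos q n Hq). lra. Qed.

Lemma qpoch_q_norm_lower q : 0 < q < 1 ->
  exists delta, 0 < delta /\ forall n, delta <= Cnorm (qpoch (RtoC q) q n).
Proof.
  intro Hq. apply qpoch_norm_lower; [exact Hq|]. intro j.
  replace (Csub C1 (Cmul (RtoC q) (RtoC (q ^ j)))) with (RtoC (1 - q * q ^ j))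
    by (apply Cx_ext; simpl; ring).
  apply RtoC_neq0.
  pose proof (pow_le1 q j ltac:(lra)). pose proof (pow_le q j ltac:(lra)). simpl. nra.
Qed.

Definition qbinR (q : R) (N a : nat) : R :=
  if Nat.leb a N then qfactR q N / (qfactR q a * qfactR q (N - a)) else 0.

Lemma qbinR_0 q N : 0 < q < 1 -> qbinR q N 0 = 1.
Proof. intro Hq. unfold qbinR. simpl. rewrite Nat.sub_0_r. pose proof (qfactR_pos q N Hq). field. lra. Qed.

Lemma qbinR_gt q N a : (N < a)%nat -> qbinR q N a = 0.
Proof. intro H. unfold qbinR. destruct (Nat.leb_spec a N); [lia | reflexivity]. Qed.

Lemma qbinR_pascal q N a : 0 < q < 1 ->
  qbinR q (S N) (S a) = qbinR q N (S a) + q ^ (N - a) * qbinR q N a.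
Proof.
  intro Hq. destruct (Compare_dec.lt_eq_lt_dec a N) as [[Hlt|Heq]|Hgt].
  - replace N with (a + S (N - a - 1))%nat by lia. set (k := (N - a - 1)%nat). unfold qbinR.
    replace (Nat.leb (S a) (S (a + S k))) with true by (symmetry; apply Nat.leb_le; lia).
    replace (Nat.leb (S a) (a + S k)) with true by (symmetry; apply Nat.leb_le; lia).
    replace (Nat.leb a (a + S k)) with true by (symmetry; apply Nat.leb_le; lia).
    replace (S (a + S k) - S a)%nat with (S k) by lia.
    replace (a + S k - S a)%nat with k by lia.
    replace (a + S k - a)%nat with (S k) by lia.
    replace (S (a + S k)) with (S (S (a + k))) by lia.
    replace (a + S k)%nat with (S (a + k)) by lia.
    simpl qfactR.
    pose proof (qfactR_pos q (a + k) Hq). pose proof (qfactR_pos q a Hq). pose proof (qfactR_pos q k Hq).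
    assert (q * q ^ a < 1) by (pose proof (pow_le1 q a ltac:(lra)); nra).
    assert (q * q ^ k < 1) by (pose proof (pow_le1 q k ltac:(lra)); nra).
    assert (E : q * (q * q ^ (a + k)) = (q * q ^ a) * (q * q ^ k)) by (rewrite pow_add; ring).
    rewrite E. simpl. field. repeat split; nra.
  - subst. unfold qbinR. rewrite (proj2 (Nat.leb_le _ _) (le_n _)), Nat.leb_refl.
    replace (Nat.leb (S N) N) with false by (symmetry; apply Nat.leb_gt; lia).
    rewrite !Nat.sub_diag. simpl. pose proof (qfactR_pos q N Hq).
    pose proof (pow_le1 q N ltac:(lra)). field. split; [lra | nra].
  - rewrite !qbinR_gt by lia. ring.
Qed.

Lemma qbinR_mul_qpoch q N a : 0 < q < 1 -> (a <= N)%nat ->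
  Cmul (RtoC (qbinR q N a)) (qpoch (RtoC q) q a) = qpoch (RtoC (q * q ^ (N - a))) q a.
Proof.
  intros Hq Ha. unfold qbinR. rewrite (proj2 (Nat.leb_le _ _) Ha).
  pose proof (qpoch_add (RtoC q) q (N - a) a) as H. replace (N - a + a)%nat with N in H by lia.
  rewrite !qpoch_q_qfactR, <- RtoC_mul in *.
  pose proof (qfactR_pos q N Hq). pose proof (qfactR_pos q a Hq). pose proof (qfactR_pos q (N - a) Hq).
  assert (E : qpoch (RtoC (q * q ^ (N - a))) q a = Cdiv (RtoC (qfactR q N)) (RtoC (qfactR q (N - a)))).
  { rewrite H. field. apply RtoC_neq0. lra. }
  rewrite E. unfold Rdiv. rewrite !RtoC_mul, RtoC_inv, RtoC_mul by nra. field.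
  split; apply RtoC_neq0; lra.
Qed.

Definition durfee_term (q : R) (y : Cx) (a : nat) : Cx :=
  Cdiv (Cmul (RtoC (q ^ (a * a))) (Cpow y a)) (qpoch (Cmul y (RtoC q)) q a).

Lemma durfee_term_S q y N a : 0 < q < 1 -> (a <= N)%nat ->
  (forall n, qpoch (Cmul y (RtoC q)) q n <> C0) ->
  Cmul (durfee_term q y (S a)) (RtoC (q ^ (N - a)))
  = Cmul (Cdiv (Cmul y (RtoC (q ^ S N))) (Csub C1 (Cmul y (RtoC q))))
         (durfee_term q (Cmul y (RtoC q)) a).
Proof.
  intros Hq Ha Hy. unfold durfee_term.
  pose proof (Hy (S a)) as Hz. rewrite qpoch_S_left in *.
  pose proof (Cmul_neq0_r _ _ Hz).
  assert (Csub C1 (Cmul y (RtoC q)) <> C0) by (intro E; apply Hz; rewrite E; ring).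
  rewrite Cpow_mul, Cpow_R. change (Cpow y (S a)) with (Cmul y (Cpow y a)).
  assert (E : q ^ (S a * S a) * q ^ (N - a) = q ^ (a * a) * q ^ a * q ^ S N)
    by (rewrite <- !pow_add; f_equal; nia).
  assert (Hq2 : RtoC (q ^ (N - a))
    = Cmul (RtoC (q ^ (a * a) * q ^ a * q ^ S N)) (Cinv (RtoC (q ^ (S a * S a))))).
  { rewrite <- E, !RtoC_mul. field. apply RtoC_neq0, pow_nonzero. lra. }
  rewrite Hq2, !RtoC_mul. field. repeat split; auto. apply RtoC_neq0, pow_nonzero; lra.
Qed.

Definition durfee_sum (q : R) (N : nat) (y : Cx) : Cx :=
  Csum (fun a => Cmul (durfee_term q y a) (RtoC (qbinR q N a))) (S N).

Lemma durfee_sum_S q N y : 0 < q < 1 -> (forall n, qpoch (Cmul y (RtoC q)) q n <> C0) ->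
  durfee_sum q (S N) y
  = Cadd (durfee_sum q N y)
         (Cmul (Cdiv (Cmul y (RtoC (q ^ S N))) (Csub C1 (Cmul y (RtoC q))))
               (durfee_sum q N (Cmul y (RtoC q)))).
Proof.
  intros Hq Hy. set (c := Cdiv (Cmul y (RtoC (q ^ S N))) (Csub C1 (Cmul y (RtoC q)))).
  unfold durfee_sum. rewrite Csum_first, qbinR_0 by exact Hq.
  rewrite (Csum_ext _ (fun a => Cadd (Cmul (durfee_term q y (S a)) (RtoC (qbinR q N (S a))))
             (Cmul c (Cmul (durfee_term q (Cmul y (RtoC q)) a) (RtoC (qbinR q N a)))))).
  - rewrite Csum_add, Csum_scal.
    rewrite (Csum_first (fun a => Cmul (durfee_term q y a) (RtoC (qbinR q N a))) N).
    cbn [Csum]. rewrite qbinR_gt, qbinR_0 by (exact Hq || lia).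
    change (RtoC 0) with C0. ring.
  - intros a Ha. rewrite qbinR_pascal, RtoC_add, RtoC_mul by exact Hq.
    pose proof (durfee_term_S q y N a Hq ltac:(lia) Hy) as E. fold c in E.
    transitivity (Cadd (Cmul (durfee_term q y (S a)) (RtoC (qbinR q N (S a))))
      (Cmul (Cmul (durfee_term q y (S a)) (RtoC (q ^ (N - a)))) (RtoC (qbinR q N a)))); [ring|].
    rewrite E. ring.
Qed.

(** A finite form of the Durfee-square identity
    [sum_a q^(a^2) y^a / (yq;q)_a = 1/(yq;q)_oo]. *)
Lemma durfee_finite q N : 0 < q < 1 -> forall y, (forall n, qpoch (Cmul y (RtoC q)) q n <> C0) ->
  durfee_sum q N y = Cinv (qpoch (Cmul y (RtoC q)) q N).
Proof.
  intro Hq. induction N as [|N IHN]; intros y Hy.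
  - unfold durfee_sum. simpl. rewrite qbinR_0 by exact Hq. unfold durfee_term. simpl. rewrite qpoch_0.
    change (RtoC 1) with C1. field. intro E; injection E; lra.
  - assert (Hyq : forall n, qpoch (Cmul (Cmul y (RtoC q)) (RtoC q)) q n <> C0).
    { intro n. pose proof (Hy (S n)) as H. rewrite qpoch_S_left in H. exact (Cmul_neq0_r _ _ H). }
    rewrite durfee_sum_S, !IHN by auto.
    pose proof (Hy N) as HA. pose proof (Hy (S N)) as HSN. pose proof (Hy (S N)) as HSN'.
    rewrite qpoch_S_left in HSN. rewrite qpoch_S in HSN'.
    pose proof (Cmul_neq0_r _ _ HSN') as HE.
    assert (HF : Csub C1 (Cmul y (RtoC q)) <> C0) by (intro E; apply HSN; rewrite E; ring).
    pose proof (qpoch_S (Cmul y (RtoC q)) q N) as R1. rewrite qpoch_S_left in R1.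
    rewrite qpoch_S_left.
    set (A := qpoch (Cmul y (RtoC q)) q N) in *.
    set (B := qpoch (Cmul (Cmul y (RtoC q)) (RtoC q)) q N) in *.
    replace B with (Cdiv (Cmul A (Csub C1 (Cmul (Cmul y (RtoC q)) (RtoC (q ^ N)))))
                         (Csub C1 (Cmul y (RtoC q)))) by (rewrite <- R1; field; auto).
    change (q ^ S N) with (q * q ^ N). rewrite RtoC_mul.
    field. repeat split; auto.
Qed.

Lemma qpoch_real_near1 s q n : 0 < q < 1 -> 0 <= s <= 1 ->
  Cnorm (Csub (qpoch (RtoC s) q n) C1) <= s / (1 - q).
Proof.
  intros Hq [Hs0 Hs1].
  enough (H : Cnorm (Csub (qpoch (RtoC s) q n) C1) <= s * Rsum (fun j => q ^ j) n).
  { eapply Rle_trans; [exact H|]. unfold Rdiv. apply Rmult_le_compat_l; [lra|].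
    apply Rsum_geom_le. lra. }
  induction n; cbn [Rsum].
  - rewrite qpoch_0. replace (Csub C1 C1) with C0 by ring. rewrite Cnorm_C0. lra.
  - rewrite qpoch_S.
    replace (Csub (Cmul (qpoch (RtoC s) q n) (Csub C1 (Cmul (RtoC s) (RtoC (q ^ n))))) C1)
      with (Csub (Cmul (Csub (qpoch (RtoC s) q n) C1) (RtoC (1 - s * q ^ n))) (RtoC (s * q ^ n)))
      by (apply Cx_ext; simpl; ring).
    eapply Rle_trans; [apply Cnorm_sub|]. rewrite Cnorm_mul, !Cnorm_R.
    pose proof (pow_le1 q n ltac:(lra)). pose proof (pow_le q n ltac:(lra)).
    rewrite (Rabs_pos_eq (s * q ^ n)), Rabs_pos_eq by nra.
    pose proof (Cnorm_ge0 (Csub (qpoch (RtoC s) q n) C1)).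
    assert (0 <= s * q ^ n) by nra.
    assert (Cnorm (Csub (qpoch (RtoC s) q n) C1) * (1 - s * q ^ n)
            <= Cnorm (Csub (qpoch (RtoC s) q n) C1)) by nra.
    lra.
Qed.

Definition Xterm (q : R) (x : Cx) (j a : nat) : Cx :=
  Cdiv (Cmul (RtoC (q ^ (a * a + j * a))) (Cpow x a))
       (Cmul (qpoch (RtoC q) q a) (qpoch (Cmul x (RtoC q)) q (j + a))).

Section Xterm_sums.

Variables (q : R) (x : Cx).
Hypothesis Hq : 0 < q < 1.
Hypothesis Hx : forall i, Csub C1 (Cmul (Cmul x (RtoC q)) (RtoC (q ^ i))) <> C0.

Lemma Xterm_qbinR_sum j N :
  Csum (fun a => Cmul (Xterm q x j a) (Cmul (RtoC (qbinR q N a)) (qpoch (RtoC q) q a))) (S N)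
  = Cinv (qpoch (Cmul x (RtoC q)) q (j + N)).
Proof.
  set (b := Cmul x (RtoC q)) in *. set (y := Cmul x (RtoC (q ^ j))).
  assert (Eyb : Cmul y (RtoC q) = Cmul b (RtoC (q ^ j))) by (unfold y, b; ring).
  assert (Hy : forall n, qpoch (Cmul y (RtoC q)) q n <> C0).
  { intro n. rewrite Eyb. intro E. apply (qpoch_neq0 b q (j + n) Hx). rewrite qpoch_add, E. ring. }
  assert (Hbj : qpoch b q j <> C0) by (apply qpoch_neq0; exact Hx).
  rewrite (Csum_ext _ (fun a => Cmul (Cinv (qpoch b q j)) (Cmul (durfee_term q y a) (RtoC (qbinR q N a))))).
  - rewrite Csum_scal. fold (durfee_sum q N y). rewrite durfee_finite by auto. rewrite qpoch_add, <- Eyb. field. split; auto.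
  - intros a Ha. unfold Xterm, durfee_term. fold b. rewrite qpoch_add, <- Eyb.
    unfold y. rewrite Cpow_mul, Cpow_R, pow_add, RtoC_mul, (pow_mult q j a).
    pose proof (Hy a) as Hya. pose proof (qpoch_q_neq0 q a Hq). unfold y in Hya. clearbody y b.
    field. repeat split; auto.
Qed.

Lemma Xterm_norm_le r : 0 < r -> exists CX, 0 <= CX /\ forall j a, Cnorm (Xterm q x j a) <= CX * r ^ a.
Proof.
  intro Hr.
  destruct (qpoch_q_norm_lower q Hq) as [dq [Hdq Hdqn]].
  destruct (qpoch_norm_lower _ q Hq Hx) as [db [Hdb Hdbn]].
  destruct (pow_sq_mul_pow_le_geom q (Cnorm x) r Hq (Cnorm_ge0 x) Hr) as [M [HM0 HM]].
  exists (M / (dq * db)). split; [apply Rdiv_le_0_compat; nra|].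
  intros j a. specialize (Hdqn a). specialize (Hdbn (j + a)%nat). specialize (HM a).
  unfold Xterm. rewrite Cnorm_div.
  2:{ apply Cmul_neq0; intro E; rewrite E, Cnorm_C0 in *; lra. }
  rewrite !Cnorm_mul, Cnorm_R, Cnorm_pow, Rabs_pos_eq by (apply pow_le; lra).
  rewrite pow_add. assert (q ^ (j * a) <= 1) by (apply pow_le1; lra).
  pose proof (pow_le q (j * a) ltac:(lra)). pose proof (pow_le q (a * a) ltac:(lra)).
  pose proof (pow_le (Cnorm x) a (Cnorm_ge0 x)).
  assert (q ^ (a * a) * q ^ (j * a) * Cnorm x ^ a <= M * r ^ a).
  { apply Rle_trans with (q ^ (a * a) * Cnorm x ^ a); [|exact HM].
    assert (0 <= q ^ (a * a) * Cnorm x ^ a) by nra. nra. }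
  unfold Rdiv. replace (M * / (dq * db) * r ^ a) with ((M * r ^ a) * / (dq * db)) by ring.
  apply Rmult_le_compat; auto.
  - apply Rmult_le_pos; [nra | apply pow_le; apply Cnorm_ge0].
  - apply Rlt_le, Rinv_0_lt_compat, Rmult_lt_0_compat; apply Cnorm_pos; intro E;
      rewrite E, Cnorm_C0 in *; lra.
  - apply Rinv_le_contravar; [nra|]. apply Rmult_le_compat; lra.
Qed.

(** The weights [[N, a]_q (q;q)_a = (q^(N-a+1);q)_a] of [Xterm_qbinR_sum] are [1 + O(q^(N-a))]. *)
Lemma Xterm_sum_near_finite : exists K, forall j N,
  Cnorm (Csub (Csum (Xterm q x j) (S N)) (Cinv (qpoch (Cmul x (RtoC q)) q (j + N)))) <= K * q ^ N.
Proof.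
  destruct (Xterm_norm_le (q * q) ltac:(nra)) as [CX [HCX HX]].
  exists (CX * q / ((1 - q) * (1 - q))). intros j N.
  rewrite <- (Xterm_qbinR_sum j N), <- Csum_sub.
  eapply Rle_trans; [apply Csum_norm|].
  apply Rle_trans with (Rsum (fun a => CX * q / (1 - q) * q ^ N * q ^ a) (S N)).
  - apply Rsum_le. intros a Ha.
    replace (Csub (Xterm q x j a) (Cmul (Xterm q x j a) (Cmul (RtoC (qbinR q N a)) (qpoch (RtoC q) q a))))
      with (Cmul (Xterm q x j a) (Csub C1 (Cmul (RtoC (qbinR q N a)) (qpoch (RtoC q) q a)))) by ring.
    rewrite Cnorm_mul, qbinR_mul_qpoch, Cnorm_sub_sym by (auto; lia).
    pose proof (pow_le1 q (N - a) ltac:(lra)). pose proof (pow_le q (N - a) ltac:(lra)).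
    pose proof (qpoch_real_near1 (q * q ^ (N - a)) q a Hq ltac:(split; nra)).
    assert (E : (q * q) ^ a * (q * q ^ (N - a)) = q * q ^ N * q ^ a).
    { rewrite Rpow_mult_distr, <- (pow_sub_mul q N a) by lia. ring. }
    apply Rle_trans with (CX * (q * q) ^ a * (q * q ^ (N - a) / (1 - q))).
    + apply Rmult_le_compat; auto using Cnorm_ge0.
    + right. replace (CX * q / (1 - q) * q ^ N * q ^ a) with (CX / (1 - q) * (q * q ^ N * q ^ a))
        by (field; lra).
      rewrite <- E. field. lra.
  - rewrite Rsum_scal. pose proof (Rsum_geom_le q (S N) ltac:(lra)).
    replace (CX * q / ((1 - q) * (1 - q)) * q ^ N) with (CX * q / (1 - q) * q ^ N * / (1 - q))
      by (field; lra).
    apply Rmult_le_compat_l; [|exact H].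
    apply Rmult_le_pos; [apply Rdiv_le_0_compat; nra | apply pow_le; lra].
Qed.

Lemma Xterm_sum_cv : exists P, P <> C0 /\ (exists C, cv_geom q C (qpoch (Cmul x (RtoC q)) q) P) /\
  exists K, forall j, cv_geom q K (Csum (Xterm q x j)) (Cinv P).
Proof.
  destruct (qpoch_cv_nonvanishing _ q Hq Hx) as [P [C [d [Hd [HP [Hdn HdP]]]]]].
  assert (HP0 : P <> C0) by (intro E; rewrite E, Cnorm_C0 in HdP; lra).
  pose proof (cv_geom_inv _ _ _ _ _ Hd Hdn HdP HP) as Hinv.
  destruct Xterm_sum_near_finite as [K1 HK1].
  set (K := K1 + C / (d * d)).
  assert (HS : forall j, cv_geom q K (fun N => Csum (Xterm q x j) (S N)) (Cinv P)).
  { intros j N. eapply Rle_trans; [apply (Cnorm_sub_triangle _ (Cinv (qpoch (Cmul x (RtoC q)) q (j + N))))|].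
    unfold K. rewrite Rmult_plus_distr_r. apply Rplus_le_compat; [apply HK1|].
    eapply Rle_trans; [apply (Hinv (j + N)%nat)|].
    apply Rmult_le_compat_l; [exact (cv_geom_nonneg _ _ _ _ Hinv)|].
    rewrite pow_add. pose proof (pow_le1 q j ltac:(lra)). pose proof (pow_le q N ltac:(lra)). nra. }
  exists P. split; [exact HP0|]. split; [exists C; exact HP|].
  exists (K / q + Cnorm (Csub C0 (Cinv P))). intro j.
  exact (cv_geom_shift q K (Csum (Xterm q x j)) (Cinv P) ltac:(lra) (HS j)).
Qed.

End Xterm_sums.

Definition Aq_term (q : R) (z : Cx) (j : nat) : Cx :=
  Cmul (Cdiv (RtoC (q ^ (j * j))) (qpoch (RtoC q) q j)) (Cpow (Copp z) j).

Lemma Aq_term_norm_le q z r : 0 < q < 1 -> 0 < r ->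
  exists CW, 0 <= CW /\ forall j, Cnorm (Aq_term q z j) <= CW * r ^ j.
Proof.
  intros Hq Hr. destruct (qpoch_q_norm_lower q Hq) as [dq [Hdq Hdqn]].
  destruct (pow_sq_mul_pow_le_geom q (Cnorm z) r Hq (Cnorm_ge0 z) Hr) as [M [HM0 HM]].
  exists (M / dq). split; [apply Rdiv_le_0_compat; lra|]. intro j.
  specialize (Hdqn j). specialize (HM j).
  unfold Aq_term. rewrite Cnorm_mul, Cnorm_div by (apply qpoch_q_neq0; exact Hq).
  rewrite Cnorm_R, Cnorm_pow, Cnorm_opp, Rabs_pos_eq by (apply pow_le; lra).
  pose proof (pow_le q (j * j) ltac:(lra)). pose proof (pow_le (Cnorm z) j (Cnorm_ge0 z)).
  unfold Rdiv.
  replace (q ^ (j * j) * / Cnorm (qpoch (RtoC q) q j) * Cnorm z ^ j)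
    with ((q ^ (j * j) * Cnorm z ^ j) * / Cnorm (qpoch (RtoC q) q j)) by ring.
  replace (M * / dq * r ^ j) with ((M * r ^ j) * / dq) by ring.
  apply Rmult_le_compat; auto.
  - apply Rmult_le_pos; auto.
  - apply Rlt_le, Rinv_0_lt_compat. lra.
  - apply Rinv_le_contravar; lra.
Qed.

Lemma Aq_partial_cv q z : 0 < q < 1 -> exists A C, cv_geom q C (Aq_partial q z) A.
Proof.
  intro Hq. destruct (Aq_term_norm_le q z q Hq ltac:(lra)) as [CW [HCW HW]].
  destruct (cv_geom_of_increments (Aq_partial q z) CW q ltac:(lra)) as [A HA].
  - intro n. change (Aq_partial q z (S n)) with (Cadd (Aq_partial q z n) (Aq_term q z n)).
    replace (Csub (Cadd (Aq_partial q z n) (Aq_term q z n)) (Aq_partial q z n))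
      with (Aq_term q z n) by ring.
    apply HW.
  - exists A, (CW / (1 - q)). exact HA.
Qed.

Lemma Rsum2_geom_le (f : nat -> nat -> R) q K N : 0 <= q < 1 -> 0 <= K ->
  (forall m n, f m n <= K * q ^ m * q ^ n) ->
  Rsum (fun m => Rsum (fun n => f m n) N) N <= K / ((1 - q) * (1 - q)).
Proof.
  intros Hq HK Hf.
  assert (Hg : Rsum (fun k => q ^ k) N <= / (1 - q)) by (apply Rsum_geom_le; exact Hq).
  pose proof (Rsum_geom_ge0 q N (proj1 Hq)).
  apply Rle_trans with (Rsum (fun m => K * q ^ m * / (1 - q)) N).
  - apply Rsum_le. intros m _.
    apply Rle_trans with (Rsum (fun n => K * q ^ m * q ^ n) N).
    + apply Rsum_le. intros n _. apply Hf.
    + rewrite Rsum_scal. apply Rmult_le_compat_l; [apply Rmult_le_pos; [lra | apply pow_le; lra] | exact Hg].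
  - rewrite (Rsum_ext _ (fun m => K * / (1 - q) * q ^ m)) by (intros; ring).
    rewrite Rsum_scal. replace (K / ((1 - q) * (1 - q))) with (K * / (1 - q) * / (1 - q)) by (field; lra).
    apply Rmult_le_compat_l; [apply Rmult_le_pos; [lra | apply Rlt_le, Rinv_0_lt_compat; lra] | exact Hg].
Qed.

Lemma qfactor_neq0_of_not_inv_pow q x : 0 < q < 1 ->
  (forall r : nat, (1 <= r)%nat -> x <> RtoC (/ q ^ r)) ->
  forall i, Csub C1 (Cmul (Cmul x (RtoC q)) (RtoC (q ^ i))) <> C0.
Proof.
  intros Hq H i E. apply (H (S i) ltac:(lia)).
  assert (Hp : q ^ S i <> 0) by (apply pow_nonzero; lra).
  assert (E2 : Cmul x (RtoC (q ^ S i)) = C1).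
  { change (q ^ S i) with (q * q ^ i). rewrite RtoC_mul.
    replace (Cmul x (Cmul (RtoC q) (RtoC (q ^ i))))
      with (Csub C1 (Csub C1 (Cmul (Cmul x (RtoC q)) (RtoC (q ^ i))))) by ring.
    rewrite E. ring. }
  rewrite RtoC_inv by exact Hp.
  transitivity (Cmul (Cmul x (RtoC (q ^ S i))) (Cinv (RtoC (q ^ S i)))).
  - field. apply RtoC_neq0. exact Hp.
  - rewrite E2. ring.
Qed.

Definition h2D_term (q : R) (z1 z2 : Cx) (m n j : nat) : Cx :=
  Cmul (Cmul (Cmul (qbinom q m j) (qbinom q n j))
             (Cmul (RtoC (q ^ ((m - j) * (n - j)) * (-1) ^ j)) (qpoch (RtoC q) q j)))
       (Cmul (Cpow z1 (m - j)) (Cpow z2 (n - j))).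

Section Corollary.

Variables (q : R) (c d z1 z2 : Cx).
Hypothesis Hq : 0 < q < 1.
Hypothesis Hc : forall i, Csub C1 (Cmul (Cmul (Cmul c z1) (RtoC q)) (RtoC (q ^ i))) <> C0.
Hypothesis Hd : forall i, Csub C1 (Cmul (Cmul (Cmul d z2) (RtoC q)) (RtoC (q ^ i))) <> C0.

Definition cor72_summand (j a b : nat) : Cx :=
  Cmul (Aq_term q (Cmul c d) j) (Cmul (Xterm q (Cmul c z1) j a) (Xterm q (Cmul d z2) j b)).

Lemma h2D_term_factor j a b :
  Cdiv (Cmul (Cmul (RtoC (q ^ ((j + a) * (j + a) + (j + b) * (j + b) - (j + a) * (j + b))))
                   (h2D_term q z1 z2 (j + a) (j + b) j))
             (Cmul (Cpow c (j + a)) (Cpow d (j + b))))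
       (Cmul (Cmul (qpoch (RtoC q) q (j + a)) (qpoch (Cmul (Cmul c z1) (RtoC q)) q (j + a)))
             (Cmul (qpoch (RtoC q) q (j + b)) (qpoch (Cmul (Cmul d z2) (RtoC q)) q (j + b))))
  = cor72_summand j a b.
Proof.
  unfold h2D_term, cor72_summand, Aq_term, Xterm, qbinom.
  replace (j + a - j)%nat with a by lia. replace (j + b - j)%nat with b by lia.
  replace ((j + a) * (j + a) + (j + b) * (j + b) - (j + a) * (j + b))%nat
    with (j * j + (a * a + j * a) + (b * b + j * b) - a * b)%nat by nia.
  assert (Ep : q ^ (j * j + (a * a + j * a) + (b * b + j * b) - a * b)
              = q ^ (j * j) * q ^ (a * a + j * a) * q ^ (b * b + j * b) * / q ^ (a * b)).
  { assert (q ^ (a * b) <> 0) by (apply pow_nonzero; lra).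
    rewrite <- (pow_add q (j * j)), <- pow_add.
    rewrite <- (pow_sub_mul q (j * j + (a * a + j * a) + (b * b + j * b)) (a * b)) by nia.
    field. exact H. }
  rewrite Ep, !RtoC_mul, RtoC_inv by (apply pow_nonzero; lra).
  replace (Copp (Cmul c d)) with (Cmul (RtoC (-1)) (Cmul c d)) by (apply Cx_ext; simpl; ring).
  rewrite !Cpow_mul, !Cpow_add, !Cpow_R.
  pose proof (qpoch_q_neq0 q j Hq). pose proof (qpoch_q_neq0 q a Hq). pose proof (qpoch_q_neq0 q b Hq).
  pose proof (qpoch_q_neq0 q (j + a) Hq). pose proof (qpoch_q_neq0 q (j + b) Hq).
  pose proof (qpoch_neq0 _ q (j + a) Hc). pose proof (qpoch_neq0 _ q (j + b) Hd).
  field. repeat split; auto. apply RtoC_neq0, pow_nonzero. lra.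
Qed.

Lemma cor72_term_expand m n :
  cor72_term q c d z1 z2 m n = Csum (fun j => cor72_summand j (m - j)%nat (n - j)%nat) (S (Nat.min m n)).
Proof.
  unfold cor72_term. change (h2D q m n z1 z2) with (Csum (h2D_term q z1 z2 m n) (S (Nat.min m n))).
  match goal with |- Cdiv (Cmul (Cmul ?P (Csum _ _)) ?Z) ?D = _ =>
    replace (Cdiv (Cmul (Cmul P (Csum (h2D_term q z1 z2 m n) (S (Nat.min m n)))) Z) D)
      with (Csum (fun j => Cdiv (Cmul (Cmul P (h2D_term q z1 z2 m n j)) Z) D) (S (Nat.min m n)))
      by (transitivity (Cmul (Csum (h2D_term q z1 z2 m n) (S (Nat.min m n))) (Cdiv (Cmul P Z) D));
          [rewrite <- Csum_scal_r; apply Csum_ext; intros; unfold Cdiv; ring | unfold Cdiv; ring])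
  end.
  apply Csum_ext. intros j Hj.
  pose proof (h2D_term_factor j (m - j) (n - j)) as H.
  replace (j + (m - j))%nat with m in H by lia. replace (j + (n - j))%nat with n in H by lia.
  exact H.
Qed.

Lemma cor72_term_norm_le : exists K, 0 <= K /\
  forall m n, Cnorm (cor72_term q c d z1 z2 m n) <= K * q ^ m * q ^ n.
Proof.
  destruct (Aq_term_norm_le q (Cmul c d) (q * q * q) Hq
    ltac:(apply Rmult_lt_0_compat; [apply Rmult_lt_0_compat|]; lra)) as [CW [HCW HW]].
  destruct (Xterm_norm_le q (Cmul c z1) Hq Hc q (proj1 Hq)) as [CX1 [HCX1 HX1]].
  destruct (Xterm_norm_le q (Cmul d z2) Hq Hd q (proj1 Hq)) as [CX2 [HCX2 HX2]].
  set (K := CW * CX1 * CX2).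
  assert (HK : 0 <= K) by (unfold K; repeat apply Rmult_le_pos; auto).
  exists (K / (1 - q)). split; [apply Rdiv_le_0_compat; lra|]. intros m n.
  rewrite cor72_term_expand. eapply Rle_trans; [apply Csum_norm|].
  apply Rle_trans with (Rsum (fun j => K * q ^ m * q ^ n * q ^ j) (S (Nat.min m n))).
  - apply Rsum_le. intros j Hj. unfold cor72_summand. rewrite !Cnorm_mul.
    specialize (HW j). specialize (HX1 j (m - j)%nat). specialize (HX2 j (n - j)%nat).
    assert (E : (q * q * q) ^ j * (q ^ (m - j) * q ^ (n - j)) = q ^ m * q ^ n * q ^ j).
    { rewrite !Rpow_mult_distr, <- (pow_sub_mul q m j), <- (pow_sub_mul q n j) by lia. ring. }
    apply Rle_trans with (CW * (q * q * q) ^ j * (CX1 * q ^ (m - j) * (CX2 * q ^ (n - j)))).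
    + apply Rmult_le_compat; auto using Cnorm_ge0.
      * apply Rmult_le_pos; apply Cnorm_ge0.
      * apply Rmult_le_compat; auto using Cnorm_ge0.
    + right. unfold K.
      replace (CW * CX1 * CX2 * q ^ m * q ^ n * q ^ j) with (CW * CX1 * CX2 * (q ^ m * q ^ n * q ^ j))
        by ring.
      rewrite <- E. ring.
  - rewrite Rsum_scal. pose proof (Rsum_geom_le q (S (Nat.min m n)) ltac:(lra)).
    replace (K / (1 - q) * q ^ m * q ^ n) with (K * q ^ m * q ^ n * / (1 - q)) by (field; lra).
    apply Rmult_le_compat_l; [|exact H].
    repeat apply Rmult_le_pos; auto; apply pow_le; lra.
Qed.

Lemma cor72_partial_sum_eq N :
  Csum (fun m => Csum (fun n => cor72_term q c d z1 z2 m n) N) N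
  = Csum (fun j => Cmul (Aq_term q (Cmul c d) j)
        (Cmul (Csum (Xterm q (Cmul c z1) j) (N - j)) (Csum (Xterm q (Cmul d z2) j) (N - j)))) N.
Proof.
  rewrite (Csum_ext _ (fun m => Csum (fun n => Csum (fun j => cor72_summand j (m - j)%nat (n - j)%nat)
             (S (Nat.min m n))) N)).
  2:{ intros m _. apply Csum_ext. intros n _. apply cor72_term_expand. }
  rewrite Csum_diag_reindex. apply Csum_ext. intros j _. unfold cor72_summand.
  transitivity (Csum (fun a => Cmul (Cmul (Aq_term q (Cmul c d) j) (Xterm q (Cmul c z1) j a))
                                   (Csum (Xterm q (Cmul d z2) j) (N - j))) (N - j)).
  - apply Csum_ext. intros a _. rewrite <- Csum_scal. apply Csum_ext. intros b _. ring.
  - rewrite Csum_scal_r, Csum_scal. ring.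
Qed.

End Corollary.

Theorem corollary7p2 (q : R) (c d z1 z2 : Cx)
  (hq0 : 0 < q) (hq1 : q < 1)
  (hc : forall r : nat, (1 <= r)%nat -> Cmul c z1 <> RtoC (/ q ^ r))
  (hd : forall r : nat, (1 <= r)%nat -> Cmul d z2 <> RtoC (/ q ^ r)) :
  (exists B : R, forall N : nat,
     Rsum (fun m => Rsum (fun n => Cnorm (cor72_term q c d z1 z2 m n)) N) N <= B) /\
  (exists A P1 P2 : Cx,
     C_cv (Aq_partial q (Cmul c d)) A /\
     C_cv (qpoch (Cmul (Cmul c z1) (RtoC q)) q) P1 /\
     C_cv (qpoch (Cmul (Cmul d z2) (RtoC q)) q) P2 /\
     C_cv (fun N => Csum (fun m => Csum (fun n => cor72_term q c d z1 z2 m n) N) N)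
          (Cdiv A (Cmul P1 P2))).
Proof.
  assert (Hq : 0 < q < 1) by lra. assert (Hr : 0 <= q < 1) by lra.
  pose proof (qfactor_neq0_of_not_inv_pow q _ Hq hc) as Hc.
  pose proof (qfactor_neq0_of_not_inv_pow q _ Hq hd) as Hd.
  split.
  - destruct (cor72_term_norm_le q c d z1 z2 Hq Hc Hd) as [K [HK Hterm]].
    exists (K / ((1 - q) * (1 - q))). intro N. exact (Rsum2_geom_le _ q K N Hr HK Hterm).
  - destruct (Aq_partial_cv q (Cmul c d) Hq) as [A [CA HA]].
    destruct (Aq_term_norm_le q (Cmul c d) (q * q) Hq ltac:(nra)) as [W [_ HW]].
    destruct (Xterm_sum_cv q (Cmul c z1) Hq Hc) as [P1 [HP1 [[CQ1 HQ1] [K1 HX1]]]].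
    destruct (Xterm_sum_cv q (Cmul d z2) Hq Hd) as [P2 [HP2 [[CQ2 HQ2] [K2 HX2]]]].
    pose proof (fun j => cv_geom_mul q K1 K2 _ _ _ _ ltac:(lra) (HX1 j) (HX2 j)) as HX.
    pose proof (cv_geom_convolution q W _ _ _ _ _ _ Hr HW HA HX) as Hconv.
    exists A, P1, P2. repeat split.
    + exact (cv_geom_C_cv _ _ _ _ Hr HA).
    + exact (cv_geom_C_cv _ _ _ _ Hr HQ1).
    + exact (cv_geom_C_cv _ _ _ _ Hr HQ2).
    + replace (Cdiv A (Cmul P1 P2)) with (Cmul A (Cmul (Cinv P1) (Cinv P2))) by (field; auto).
      eapply cv_geom_C_cv; [exact Hr|]. intro N. rewrite cor72_partial_sum_eq by auto. apply Hconv.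
Qed.
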